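(* Let $\Sigma$ be a ranked set (arities $\ge1$) and $L\subseteq\mathsf{V}_1\Sigma$. The following are equivalent: (1) $L$ is recognised by a $\mathsf{V}$-algebra that is finite on every arity; (2) $L$ is recognised by (is a union of classes of) a congruence of the algebra $\mathsf{V}\Sigma$ with finitely many equivalence classes on every arity; (3) $L$ is VR-recognisable, i.e. there is an equivalence relation on $\mathsf{V}\Sigma$ of which $L$ is a union of classes, which has finitely many classes on every arity and is compatible with all VR-operations.
   Context: Here a ranked set is a set whose elements have arities in $\{1,2,\dots\}$; morphisms are arity-preserving. A corner of a ranked set $V$ is $v[i]$ with $v\in V$, $1\le i\le$ arity of $v$. For $n\ge1$, an $n$-ary $\mathsf{V}$-hypergraph with ports over $\Sigma$ consists of a nonempty finite ranked set of hypervertices, an arity-preserving labelling by $\Sigma$, a binary (directed) edge relation on corners, and a (total, not necessarily surjective) port function from corners to $\{1,\dots,n\}$ (corners mapped to $i$ are $i$-ports). $\mathsf{V}\Sigma$ is the ranked set of these up to isomorphism; $\mathsf{V}_1\Sigma$ its arity-1 part. $\mathsf{V}f$ relabels. The unit of an $n$-ary $a$ has one hypervertex $v$ labelled $a$, no edges, $v[i]$ an $i$-port. Flattening of $G\in\mathsf{V}\mathsf{V}\Sigma$: hypervertices are pairs $(v,w)$ with $v$ a hypervertex of $G$ and $w$ a hypervertex of the label of $v$ (label and arity from $w$); the arity is that of $G$; if $w[i]$ is a $j$-port in the label of $v$ and $v[j]$ is a $k$-port in $G$ then $(v,w)[i]$ is a $k$-port; there is an edge $(v,w)[i]\to(v',w')[i']$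 iff either $v=v'$ and $w[i]\to w'[i']$ in the label of $v$, or $v[j]\to v'[j']$ in $G$, where $j$ ($j'$) is the port number of $w[i]$ in the label of $v$ (of $w'[i']$ in the label of $v'$). A $\mathsf{V}$-algebra is a ranked set $A$ with arity-preserving $\pi:\mathsf{V}A\to A$, $\pi(\mathrm{unit}\,a)=a$, $\pi\circ\mathsf{V}\pi=\pi\circ\mathrm{flatten}$; homomorphisms commute with products; $\mathsf{V}\Sigma$ is an algebra with flattening. $L$ is recognised by $\mathcal{A}$ if $L=h^{-1}(F)\cap\mathsf{V}_1\Sigma$ for a homomorphism $h:\mathsf{V}\Sigma\to\mathcal{A}$ and set $F$. A polynomial operation with variables a ranked set $X$ is given by $t\in\mathsf{V}(\mathsf{V}\Sigma+X)$ and maps arity-preserving $\eta:X\to\mathsf{V}\Sigma$ to the flattening of $t$ with each label $x$ replaced by $\eta(x)$. A congruence is an equivalence relation compatible with all polynomial operations (componentwise equivalent inputs give equivalent outputs). VR-operations: for each $n$, disjoint union of two $n$-ary elements (ports kept); a constant for each unit; for each $f:\{1,\dots,n\}\to\{1,\dots,m\}$, the operation turning an $n$-ary element into an $m$-ary one by composing the port function with $f$; for each $E\subseteq\{1,\dots,n\}^2$, the operation adding directed edges from every $i$-port to every $j$-port for all $(i,j)\in E$. *)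

From Stdlib Require List.
From mathcomp Require Import all_boot.
Set Implicit Arguments. Unset Strict Implicit. Unset Printing Implicit Defensive.

(* Conventions: hypervertices of a hypergraph are the ordinals
   'I_nv; the corner v[i] of the paper is encoded as (v, i-1) with
   0 <= i-1 < arv v; port numbers 1..n of the paper are encoded as 0..n-1.
   Edges and ports are stored as total functions on nat indices; only the
   values on valid corners are meaningful (edges are required, by wf, to
   vanish outside valid corners). *)

Record hg (X : Type) : Type := HG {
  nv   : nat;
  ari  : nat;
  arv  : 'I_nv -> nat;
  lab  : 'I_nv -> X;
  edge : 'I_nv -> nat -> 'I_nv -> nat -> bool;
  port : 'I_nv -> nat -> nat
}.
Arguments nv {X} h. Arguments ari {X} h. Arguments arv {X} h _.
Arguments lab {X} h _. Arguments edge {X} h _ _ _ _. Arguments port {X} h _ _.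

Definition wf (X : Type) (arX : X -> nat) (P : X -> Prop) (G : hg X) : Prop :=
  0 < nv G /\
  (forall v, arX (lab G v) = arv G v /\ P (lab G v)) /\
  (forall v i, i < arv G v -> port G v i < ari G) /\
  (forall v i w j, edge G v i w j -> i < arv G v /\ j < arv G w).

Definition wfV (X : Type) (arX : X -> nat) (G : hg X) : Prop :=
  wf arX (fun _ => True) G.

Definition wfVV (X : Type) (arX : X -> nat) (G : hg (hg X)) : Prop :=
  wf (@ari X) (wfV arX) G.

(* isomorphism of hypergraphs (V X is the set of these up to isomorphism) *)
Definition hiso (X : Type) (G H : hg X) : Prop :=
  ari G = ari H /\
  exists phi : 'I_(nv G) -> 'I_(nv H), bijective phi /\
    forall v, lab H (phi v) = lab G v /\ arv H (phi v) = arv G v /\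
      (forall i, i < arv G v -> port H (phi v) i = port G v i) /\
      (forall i w j, edge H (phi v) i (phi w) j = edge G v i w j).

Definition hunit (X : Type) (arX : X -> nat) (a : X) : hg X :=
  @HG X 1 (arX a) (fun _ => arX a) (fun _ => a) (fun _ _ _ _ => false)
      (fun _ i => i).

Definition Vmap (X Y : Type) (f : X -> Y) (G : hg X) : hg Y :=
  @HG Y (nv G) (ari G) (arv G) (fun v => f (lab G v)) (edge G) (port G).

(* F is (a representative of) the flattening of G *)
Definition is_flat (X : Type) (G : hg (hg X)) (F : hg X) : Prop :=
  ari F = ari G /\
  exists phi : 'I_(nv F) -> {v : 'I_(nv G) & 'I_(nv (lab G v))},
    bijective phi /\
    forall k : 'I_(nv F),
      lab F k = lab (lab G (tag (phi k))) (tagged (phi k)) /\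
      arv F k = arv (lab G (tag (phi k))) (tagged (phi k)) /\
      (forall i, i < arv F k ->
         port F k i = port G (tag (phi k))
                              (port (lab G (tag (phi k))) (tagged (phi k)) i)) /\
      (forall i k' j, i < arv F k -> j < arv F k' ->
         (edge F k i k' j <->
           (exists (v : 'I_(nv G)) (w w' : 'I_(nv (lab G v))),
               phi k = Tagged (fun v => 'I_(nv (lab G v))) w /\
               phi k' = Tagged (fun v => 'I_(nv (lab G v))) w' /\
               edge (lab G v) w i w' j)
           \/ edge G (tag (phi k))
                     (port (lab G (tag (phi k))) (tagged (phi k)) i)
                     (tag (phi k'))
                     (port (lab G (tag (phi k'))) (tagged (phi k')) j))).

Definition ranked (A : Type) (arA : A -> nat) : Prop := forall a, 0 < arA a.

Definition finite_on_arities (A : Type) (arA : A -> nat) : Prop :=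
  forall n, exists s : list A, forall a, arA a = n -> List.In a s.

Definition is_Valg (A : Type) (arA : A -> nat) (pi : hg A -> A) : Prop :=
  (forall G, wfV arA G -> arA (pi G) = ari G) /\
  (forall G H, wfV arA G -> wfV arA H -> hiso G H -> pi G = pi H) /\
  (forall a, pi (hunit arA a) = a) /\
  (forall (G : hg (hg A)) (F : hg A), wfVV arA G -> wfV arA F -> is_flat G F ->
     pi (Vmap pi G) = pi F).

Definition is_hom (S : Type) (arS : S -> nat) (A : Type) (arA : A -> nat)
    (pi : hg A -> A) (h : hg S -> A) : Prop :=
  (forall G, wfV arS G -> arA (h G) = ari G) /\
  (forall G H, wfV arS G -> wfV arS H -> hiso G H -> h G = h H) /\
  (forall (G : hg (hg S)) (F : hg S), wfVV arS G -> wfV arS F -> is_flat G F ->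
     h F = pi (Vmap h G)).

Definition rec_by_finite_algebra (S : Type) (arS : S -> nat) (L : hg S -> Prop)
  : Prop :=
  exists (A : Type) (arA : A -> nat) (pi : hg A -> A),
    ranked arA /\ finite_on_arities arA /\ is_Valg arA pi /\
    exists (h : hg S -> A) (F : A -> Prop),
      is_hom arS arA pi h /\
      forall G, wfV arS G -> ari G = 1 -> (L G <-> F (h G)).

Definition equiv_VS (S : Type) (arS : S -> nat) (R : hg S -> hg S -> Prop)
  : Prop :=
  (forall G, wfV arS G -> R G G) /\
  (forall G H, R G H -> R H G) /\
  (forall G H K, R G H -> R H K -> R G K) /\
  (forall G H, R G H -> wfV arS G /\ wfV arS H /\ ari G = ari H) /\
  (forall G H, wfV arS G -> wfV arS H -> hiso G H -> R G H).

Definition finite_index (S : Type) (arS : S -> nat) (R : hg S -> hg S -> Prop)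
  : Prop :=
  forall n, exists s : list (hg S),
    forall G, wfV arS G -> ari G = n -> exists H, List.In H s /\ R G H.

Definition union_of_classes (S : Type) (arS : S -> nat)
    (R : hg S -> hg S -> Prop) (L : hg S -> Prop) : Prop :=
  forall G H, wfV arS G -> wfV arS H -> ari G = 1 -> R G H -> L G -> L H.

Definition sum_ar (S Xv : Type) (arXv : Xv -> nat) (l : hg S + Xv) : nat :=
  match l with inl g => ari g | inr x => arXv x end.

Definition sum_ok (S Xv : Type) (arS : S -> nat) (l : hg S + Xv) : Prop :=
  match l with inl g => wfV arS g | inr _ => True end.

Definition psubst (S Xv : Type) (eta : Xv -> hg S) (t : hg (hg S + Xv))
  : hg (hg S) :=
  Vmap (fun l => match l with inl g => g | inr x => eta x end) t.

Definition congruence (S : Type) (arS : S -> nat) (R : hg S -> hg S -> Prop)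
  : Prop :=
  equiv_VS arS R /\
  forall (Xv : Type) (arXv : Xv -> nat), ranked arXv ->
  forall t : hg (hg S + Xv), wf (sum_ar arXv) (sum_ok arS) t ->
  forall eta eta' : Xv -> hg S,
    (forall x, wfV arS (eta x) /\ ari (eta x) = arXv x) ->
    (forall x, wfV arS (eta' x) /\ ari (eta' x) = arXv x) ->
    (forall x, R (eta x) (eta' x)) ->
    forall F F', wfV arS F -> wfV arS F' ->
      is_flat (psubst eta t) F -> is_flat (psubst eta' t) F' -> R F F'.

Definition rec_by_finite_congruence (S : Type) (arS : S -> nat)
    (L : hg S -> Prop) : Prop :=
  exists R, congruence arS R /\ finite_index arS R /\ union_of_classes arS R L.

Definition dunion (X : Type) (G H : hg X) : hg X :=
  @HG X (nv G + nv H) (ari G)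
    (fun k => match split k with inl v => arv G v | inr w => arv H w end)
    (fun k => match split k with inl v => lab G v | inr w => lab H w end)
    (fun k i k' j => match split k, split k' with
                     | inl v, inl v' => edge G v i v' j
                     | inr w, inr w' => edge H w i w' j
                     | _, _ => false end)
    (fun k i => match split k with inl v => port G v i | inr w => port H w i end).

Definition rename_ports (X : Type) (m : nat) (f : nat -> nat) (G : hg X) : hg X :=
  @HG X (nv G) m (arv G) (lab G) (edge G) (fun v i => f (port G v i)).

Definition add_edges (X : Type) (E : rel nat) (G : hg X) : hg X :=
  @HG X (nv G) (ari G) (arv G) (lab G)
    (fun v i w j => edge G v i w j ||
        [&& i < arv G v, j < arv G w & E (port G v i) (port G w j)])
    (port G).

Definition VR_compatible (S : Type) (arS : S -> nat) (R : hg S -> hg S -> Prop)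
  : Prop :=
  (forall G G' H H', ari G = ari H -> R G G' -> R H H' ->
     R (dunion G H) (dunion G' H')) /\
  (forall n m (f : nat -> nat), 0 < n -> (forall i, i < n -> f i < m) ->
     forall G G', ari G = n -> R G G' ->
       R (rename_ports m f G) (rename_ports m f G')) /\
  (forall n (E : rel nat), 0 < n ->
     (forall i j, E i j -> i < n /\ j < n) ->
     forall G G', ari G = n -> R G G' -> R (add_edges E G) (add_edges E G')).

Definition VR_recognisable (S : Type) (arS : S -> nat) (L : hg S -> Prop)
  : Prop :=
  exists R, equiv_VS arS R /\ VR_compatible arS R /\ finite_index arS R /\
            union_of_classes arS R L.

From mathcomp Require Import all_boot zify.
From Stdlib Require Import ClassicalEpsilon FunctionalExtensionality.
From Stdlib Require Import PropExtensionality ProofIrrelevance.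
Set Implicit Arguments. Unset Strict Implicit. Unset Printing Implicit Defensive.

(* (1) => (2): the kernel of a homomorphism into an algebra that is finite on
   every arity is a congruence of finite index.
   (2) => (1): the classes of a congruence form a V-algebra whose product maps
   a hypergraph of classes to the class of the flattening of any hypergraph of
   representatives; compatibility with polynomial operations makes it well
   defined and associativity of flattening gives the algebra laws.
   (2) => (3): every VR-operation is a polynomial operation.
   (3) => (2): conversely, every polynomial operation is a composite of
   VR-operations, because the flattening of a hypergraph G of hypergraphs is
   obtained from the disjoint union of its labels, with their ports renamed
   apart, by adding the edges of G between these ports and then renaming each
   of them to the port of the corresponding corner of G. *)

(** * Flattening *)

Notation flat_vertex G := {v : 'I_(nv G) & 'I_(nv (lab G v))}.

Section Flattening.
Variable X : Type.
Implicit Types (g : hg X) (G : hg (hg X)).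

(* Indexing the target vertex by [nat] lets [edge_at] be transported along
   equalities of hypergraphs (see [cast_vertex_edge_at]). *)
Definition edge_at g (w : 'I_(nv g)) i (b : nat) j : bool :=
  if (insub b : option 'I_(nv g)) is Some w' then edge g w i w' j else false.

Lemma edge_at_val g (w w' : 'I_(nv g)) i j : edge_at w i (val w') j = edge g w i w' j.
Proof. by rewrite /edge_at valK. Qed.

Definition inner_edge G (p p' : flat_vertex G) i j :=
  (tag p == tag p') && edge_at (tagged p) i (val (tagged p')) j.

Lemma inner_edgeP G (p p' : flat_vertex G) i j :
  (exists v (w w' : 'I_(nv (lab G v))),
     p = Tagged (fun v => 'I_(nv (lab G v))) w /\
     p' = Tagged (fun v => 'I_(nv (lab G v))) w' /\ edge (lab G v) w i w' j)
  <-> inner_edge p p' i j.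
Proof.
case: p p' => v w [v' w'] /=; rewrite /inner_edge /=; split.
- move=> [u [x [x' [e1 [e2 E]]]]].
  move: (congr1 tag e1) (congr1 tag e2) => /= ev ev'; subst v v'.
  by rewrite (eq_from_Tagged e1) (eq_from_Tagged e2) eqxx edge_at_val.
- by case/andP=> /eqP ev; subst v' => E; exists v, w, w'; rewrite -edge_at_val.
Qed.

Lemma flat_edge_iff G (p p' : flat_vertex G) i j (b top : bool) :
  (b <-> (exists v (w w' : 'I_(nv (lab G v))),
     p = Tagged (fun v => 'I_(nv (lab G v))) w /\
     p' = Tagged (fun v => 'I_(nv (lab G v))) w' /\ edge (lab G v) w i w' j) \/ top)
  <-> b = inner_edge p p' i j || top.
Proof.
rewrite inner_edgeP; split=> [H|->]; last by split=> [/orP|[->|->]]; rewrite ?orbT.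
by apply/idP/idP=> [/H [->|->]|/orP [] ?]; rewrite ?orbT //; apply/H; [left|right].
Qed.

Definition flat G : hg X :=
  @HG X #|{: flat_vertex G}| (ari G)
    (fun k => let p := enum_val k in arv (lab G (tag p)) (tagged p))
    (fun k => let p := enum_val k in lab (lab G (tag p)) (tagged p))
    (fun k i k' j => let p := enum_val k in let p' := enum_val k' in
        [&& i < arv (lab G (tag p)) (tagged p), j < arv (lab G (tag p')) (tagged p') &
         inner_edge p p' i j
         || edge G (tag p) (port (lab G (tag p)) (tagged p) i)
                   (tag p') (port (lab G (tag p')) (tagged p') j)])
    (fun k i => let p := enum_val k in
        port G (tag p) (port (lab G (tag p)) (tagged p) i)).

Lemma flat_is_flat G : is_flat G (flat G).
Proof.
split=> //; exists enum_val; split; first exact: enum_val_bij.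
move=> k; do 3!split=> //.
by move=> i k' j Hi Hj /=; apply/flat_edge_iff; rewrite Hi Hj.
Qed.

Lemma flat_wf (arX : X -> nat) G : wfVV arX G -> wfV arX (flat G).
Proof.
case=> n0 [Hl [Hp He]]; split.
  have [_ [n1 _]] := Hl (Ordinal n0).
  by apply/card_gt0P; exists (Tagged (fun v => 'I_(nv (lab G v))) (Ordinal n1)).
split.
  by move=> k /=; split=> //; have [_ [_ [H _]]] := Hl (tag (enum_val k)); exact: (H _).1.
split; last by move=> k i k' j /= /and3P [].
move=> k i /= Hi; apply: Hp.
by have [<- [_ [_ [H _]]]] := Hl (tag (enum_val k)); exact: H _ _ Hi.
Qed.

(* Wellformedness is needed: [is_flat] does not constrain edges at invalid corners. *)
Lemma is_flat_hiso (arX : X -> nat) G F1 F2 :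
  is_flat G F1 -> is_flat G F2 -> wfV arX F1 -> wfV arX F2 -> hiso F1 F2.
Proof.
case=> a1 [p1 [b1 H1]] [a2 [p2 [[g2 c2 d2] H2]]] [_ [_ [_ E1]]] [_ [_ [_ E2]]].
split; first by rewrite a1 a2.
exists (g2 \o p1); split; first by apply: bij_comp => //; exists p2.
move=> v /=.
have [l1 [ar1 [po1 ed1]]] := H1 v.
have [l2 [ar2 [po2 ed2]]] := H2 (g2 (p1 v)); rewrite d2 in l2 ar2 po2 ed2.
split; first by rewrite l2 l1.
split; first by rewrite ar2 ar1.
split=> [i Hi|i w j]; first by rewrite po2 ?po1 // ar2 -ar1.
have [_ [arw1 _]] := H1 w.
have [_ [arw2 _]] := H2 (g2 (p1 w)); rewrite d2 in arw2.
have [Hi|Hi] := boolP (i < arv F1 v); last first.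
  apply/idP/idP=> [/E2 []|/E1 []]; last by rewrite (negbTE Hi).
  by rewrite ar2 -ar1 (negbTE Hi).
have [Hj|Hj] := boolP (j < arv F1 w); last first.
  apply/idP/idP=> [/E2 []|/E1 []]; last by rewrite (negbTE Hj).
  by rewrite arw2 -arw1 (negbTE Hj).
have := ed2 i (g2 (p1 w)) j; rewrite d2 ar2 arw2 -ar1 -arw1 => /(_ Hi Hj) E2'.
have E1' := ed1 i w j Hi Hj.
by apply/idP/idP=> [/E2'/E1'|/E1'/E2'].
Qed.

Lemma hiso_refl g : hiso g g.
Proof. by split=> //; exists id; split=> //; exists id. Qed.

Lemma is_flat_hunit g g' : hiso g g' -> is_flat (hunit (@ari X) g) g'.
Proof.
case=> a [f [bf Hf]]; have [f' c d] := bf.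
split; first by rewrite /= a.
exists (fun k => existT (fun _ : 'I_1 => 'I_(nv g)) ord0 (f' k)); split.
  exists (fun p => f (tagged p)) => [k|[v w]] /=; first by rewrite d.
  by rewrite c; congr existT; apply/val_inj; case: v {w} => [[]].
move=> k /=.
have [l1 [ar1 [po1 ed1]]] := Hf (f' k); rewrite d in l1 ar1 po1.
do 2!split=> //; split=> [i Hi|i k' j _ _]; first by rewrite po1 // -ar1.
split=> [E|[[v [w [w' [e1 [e2 E]]]]]|//]].
  by left; exists ord0, (f' k), (f' k'); rewrite /= -ed1 !d.
move: (congr1 tag e1) => /= ev; subst v.
by move: E; rewrite -(eq_from_Tagged e1) -(eq_from_Tagged e2) /= -ed1 !d.
Qed.

End Flattening.

Definition cast_vertex X (g1 g2 : hg X) (e : g1 = g2) (w : 'I_(nv g1)) : 'I_(nv g2) :=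
  cast_ord (congr1 nv e) w.

Section CastVertex.
Variables (X : Type) (g1 : hg X).

Lemma cast_vertex_lab g2 (e : g1 = g2) w : lab g2 (cast_vertex e w) = lab g1 w.
Proof. by case: g2 / e; rewrite /cast_vertex cast_ord_id. Qed.
Lemma cast_vertex_arv g2 (e : g1 = g2) w : arv g2 (cast_vertex e w) = arv g1 w.
Proof. by case: g2 / e; rewrite /cast_vertex cast_ord_id. Qed.
Lemma cast_vertex_port g2 (e : g1 = g2) w i : port g2 (cast_vertex e w) i = port g1 w i.
Proof. by case: g2 / e; rewrite /cast_vertex cast_ord_id. Qed.
Lemma cast_vertex_edge_at g2 (e : g1 = g2) w i b j :
  edge_at (cast_vertex e w) i b j = edge_at w i b j.
Proof. by case: g2 / e; rewrite /cast_vertex cast_ord_id. Qed.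

End CastVertex.

Lemma card_tagged_ord n (f : 'I_n -> nat) : #|{: {k : 'I_n & 'I_(f k)}}| = \sum_k f k.
Proof. by rewrite card_tagged sumnE big_map big_enum; under eq_bigr do rewrite card_ord. Qed.

Section FlatAssoc.
Variables (X Y : Type) (arX : X -> nat) (arY : Y -> nat) (m : X -> hg Y).
Hypothesis Hm : forall x, wfV arY (m x) /\ ari (m x) = arX x.
Variables (G : hg (hg X)) (F : hg X) (phi : 'I_(nv F) -> flat_vertex G).
Hypothesis phi_lab : forall k, lab F k = lab (lab G (tag (phi k))) (tagged (phi k)).
Hypothesis phi_bij : bijective phi.

Let GF := Vmap (fun g => flat (Vmap m g)) G.

(* Vertex [u] of [m (lab F k)] is sent to vertex [(tagged (phi k), u)] of the
   flattening of the [m]-image of the label of [tag (phi k)]. *)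
Definition assoc_vertex (q : {k : 'I_(nv F) & 'I_(nv (m (lab F k)))}) : flat_vertex GF :=
  existT (fun v => 'I_(nv (flat (Vmap m (lab G v))))) (tag (phi (tag q)))
   (enum_rank (existT (fun w : 'I_(nv (lab G (tag (phi (tag q))))) =>
                         'I_(nv (m (lab (lab G (tag (phi (tag q)))) w))))
                (tagged (phi (tag q))) (cast_vertex (congr1 m (phi_lab (tag q))) (tagged q)))).

Lemma assoc_vertex_bij : bijective assoc_vertex.
Proof.
apply: inj_card_bij.
  move=> [k1 u1] [k2 u2]; rewrite /assoc_vertex /=.
  have Hinj : (k1 == k2) = (phi k1 == phi k2) by rewrite (bij_eq phi_bij).
  move: (phi_lab k1) (phi_lab k2) Hinj.
  case: (phi k1) => v1 w1; case: (phi k2) => v2 w2 /= e1 e2 Hinj E.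
  move: (congr1 tag E) => /= ev; subst v2.
  have /enum_rank_inj E2 := eq_from_Tagged E.
  move: (congr1 tag E2) => /= ew; subst w2.
  move: Hinj; rewrite eqxx => /eqP ek; subst k2.
  by have -> : u1 = u2 by apply/val_inj; exact: (congr1 val (eq_from_Tagged E2)).
rewrite !card_tagged_ord /=; under eq_bigr do rewrite card_tagged_ord.
rewrite (sig_big_dep xpredT (fun _ => xpredT) (fun v w => nv (m (lab (lab G v) w)))) /=.
rewrite (reindex phi) /=; last exact: onW_bij.
by under eq_bigr do rewrite -phi_lab.
Qed.

End FlatAssoc.

(* Associativity of flattening: substituting hypergraphs for labels commutes
   with flattening. *)
Lemma is_flat_flat_Vmap X Y (arX : X -> nat) (arY : Y -> nat) (m : X -> hg Y)
  (G : hg (hg X)) (F : hg X) :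
  (forall x, wfV arY (m x) /\ ari (m x) = arX x) -> wfV arX F ->
  is_flat G F -> is_flat (Vmap (fun g => flat (Vmap m g)) G) (flat (Vmap m F)).
Proof.
move=> Hm WF [a [phi [bphi Hphi]]].
have el k : lab F k = lab (lab G (tag (phi k))) (tagged (phi k)) := (Hphi k).1.
split=> //; exists (fun x => assoc_vertex el (enum_val x)); split.
  exact: bij_comp (assoc_vertex_bij m el bphi) (enum_val_bij _).
have pb k u i : i < arv (m (lab F k)) u -> port (m (lab F k)) u i < arv F k.
  have [[_ [_ [Hp _]]] ea] := Hm (lab F k).
  by case: WF => _ [Hl _]; rewrite -(Hl k).1 -ea; exact: Hp.
move=> x; split.
  by rewrite /=; case: (enum_val x) => k u /=; rewrite enum_rankK /= cast_vertex_lab.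
split.
  by rewrite /=; case: (enum_val x) => k u /=; rewrite enum_rankK /= cast_vertex_arv.
split.
  rewrite /=; case: (enum_val x) => k u /= i Hi; rewrite enum_rankK /= cast_vertex_port.
  by have [_ [_ [-> //]]] := Hphi k; exact: pb.
move=> i x' j Hi Hj; apply/flat_edge_iff; move: Hi Hj; rewrite /inner_edge /=.
case: (enum_val x) => k u; case: (enum_val x') => k' u' /= Hi Hj.
rewrite !enum_rankK /= !cast_vertex_port Hi Hj /=.
have [_ [_ [_ Hed]]] := Hphi k.
rewrite ((flat_edge_iff _ _ _ _ _ _).1 (Hed _ _ _ (pb _ _ _ Hi) (pb _ _ _ Hj))).
have Hinj : (k == k') = (phi k == phi k') by rewrite (bij_eq bphi).
move: Hinj (el k) (el k'); rewrite /inner_edge.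
case: (phi k) => v w; case: (phi k') => v' w' /= Hinj e e'.
have [ev|nev] := eqVneq v v'; last first.
  rewrite Hinj.
  have -> // : (existT (fun v => 'I_(nv (lab G v))) v w == existT _ v' w') = false.
  by apply/negbTE/eqP=> /(congr1 tag) /= ev; rewrite ev eqxx in nev.
subst v'; rewrite !edge_at_val /= !enum_rankK /= Hinj eq_Tagged.
rewrite !cast_vertex_arv Hi Hj /= !cast_vertex_port /inner_edge /=.
by rewrite cast_vertex_edge_at orbA.
Qed.

(** * Flattening by VR-operations *)

Definition port_code (B v j : nat) := v * B + j.

Section PortCode.
Variables (B : nat).

Lemma port_code_div v j : j < B -> port_code B v j %/ B = v.
Proof. by move=> jB; rewrite /port_code divnMDl ?divn_small ?addn0 //; lia. Qed.

Lemma port_code_mod v j : j < B -> port_code B v j %% B = j.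
Proof. by move=> jB; rewrite /port_code modnMDl modn_small. Qed.

Lemma port_code_inj v j v' j' : j < B -> j' < B ->
  port_code B v j = port_code B v' j' -> v = v' /\ j = j'.
Proof.
move=> jB jB' e; split; first by rewrite -(port_code_div v jB) e port_code_div.
by rewrite -(port_code_mod v jB) e port_code_mod.
Qed.

Lemma port_code_lt n v j : v < n -> j < B -> port_code B v j < n * B.
Proof. by rewrite /port_code => *; nia. Qed.

End PortCode.

Lemma split_lshift m n (w : 'I_m) : split (lshift n w) = inl w.
Proof. exact: (unsplitK (inl w)). Qed.
Lemma split_rshift m n (w : 'I_n) : split (rshift m w) = inr w.
Proof. exact: (unsplitK (inr w)). Qed.

Section CodedPorts.
Variable Y : Type.
Implicit Type g : hg Y.

Definition max_arv g := \max_(u < nv g) arv g u.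

Definition coded_edges g B : rel nat := fun a b =>
  [exists v : 'I_(nv g), exists v' : 'I_(nv g), exists j : 'I_B, exists j' : 'I_B,
     [&& a == port_code B v j, b == port_code B v' j' & edge g v j v' j']].

(* Ports outside the range of [port_code] decode to the junk value [0]. *)
Definition decode_port g B a :=
  if (insub (a %/ B) : option 'I_(nv g)) is Some v then
    (if a %% B < arv g v then port g v (a %% B) else 0) else 0.

Lemma max_arv_ge g u : arv g u <= max_arv g.
Proof. by rewrite /max_arv (bigD1 u) //= leq_maxl. Qed.

Lemma coded_edgesE g B (v v' : 'I_(nv g)) j j' : j < B -> j' < B ->
  coded_edges g B (port_code B v j) (port_code B v' j') = edge g v j v' j'.
Proof.
move=> jB jB'; apply/existsP/idP=> [[v1 /existsP [v1' /existsP [j1 /existsP [j1']]]]|E].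
  case/and3P=> /eqP e1 /eqP e2.
  have [/val_inj ev ej] := port_code_inj jB (ltn_ord j1) e1.
  have [/val_inj ev' ej'] := port_code_inj jB' (ltn_ord j1') e2.
  by subst.
exists v; apply/existsP; exists v'; apply/existsP; exists (Ordinal jB).
by apply/existsP; exists (Ordinal jB'); rewrite !eqxx E.
Qed.

Lemma coded_edges_lt g B a b :
  coded_edges g B a b -> a < nv g * B /\ b < nv g * B.
Proof.
case/existsP=> v /existsP [v' /existsP [j /existsP [j' /and3P [/eqP -> /eqP -> _]]]].
by split; apply: port_code_lt.
Qed.

Lemma coded_edges_no_edge g B a b :
  (forall v j v' j', edge g v j v' j' = false) -> coded_edges g B a b = false.
Proof.
move=> H; apply/negbTE/existsP.
by case=> v /existsP [v' /existsP [j /existsP [j' /and3P [_ _]]]]; rewrite H.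
Qed.

Lemma decode_port_code g B (v : 'I_(nv g)) j : j < B -> j < arv g v ->
  decode_port g B (port_code B v j) = port g v j.
Proof. by move=> jB ja; rewrite /decode_port port_code_div // port_code_mod // valK ja. Qed.

Lemma decode_port_lt g B a :
  (forall v j, j < arv g v -> port g v j < ari g) -> 0 < ari g ->
  decode_port g B a < ari g.
Proof. by move=> Hp H0; rewrite /decode_port; case: insub => [v|//]; case: ifP => // /Hp. Qed.

End CodedPorts.

Section VRFlattening.
Variable X : Type.
Implicit Type G : hg (hg X).

Definition coded_label G M B (v : 'I_(nv G)) : hg X :=
  rename_ports M (port_code B v) (lab G v).

Fixpoint dunion_labels G M B (v : 'I_(nv G)) (s : seq 'I_(nv G)) : hg X :=
  if s is v' :: s' then dunion (coded_label M B v) (dunion_labels M B v' s')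
  else coded_label M B v.

Lemma dunion_labels_ari G M B v s : ari (dunion_labels (G := G) M B v s) = M.
Proof. by case: s. Qed.

Lemma dunion_labels_rep G M B v s : uniq (v :: s) ->
  exists f : 'I_(nv (dunion_labels M B v s)) -> flat_vertex G,
   [/\ injective f, (forall p, tag p \in v :: s -> exists k, f k = p),
       (forall k, tag (f k) \in v :: s) &
   forall k, [/\ lab (dunion_labels M B v s) k = lab (lab G (tag (f k))) (tagged (f k)),
     arv (dunion_labels M B v s) k = arv (lab G (tag (f k))) (tagged (f k)),
     (forall i, port (dunion_labels M B v s) k i =
        port_code B (tag (f k)) (port (lab G (tag (f k))) (tagged (f k)) i)) &
     (forall i k' j, edge (dunion_labels M B v s) k i k' j = inner_edge (f k) (f k') i j)]].
Proof.
elim: s v => [|v' s IH] v Hu.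
  exists (fun w => existT (fun v => 'I_(nv (lab G v))) v w); split.
  - by move=> w w' E; exact: eq_from_Tagged E.
  - by case=> u w /=; rewrite inE => /eqP eu; subst u; exists w.
  - by move=> k; rewrite /= inE.
  - by move=> k; split=> //= i k' j; rewrite /inner_edge eqxx edge_at_val.
have [nv_s Hu'] := andP Hu.
have [f' [fi fc ft fp]] := IH v' Hu'.
pose f k := match split k with
             | inl w => existT (fun v => 'I_(nv (lab G v))) v w
             | inr k' => f' k' end.
have tagne k' : tag (f' k') != v by apply: contraNneq nv_s => <-; exact: ft.
exists f; split.
- move=> k1 k2; rewrite /f -[k1]splitK -[k2]splitK.
  case: (split k1) => [w1|k1']; case: (split k2) => [w2|k2']; rewrite !unsplitK.
  + by move=> E; rewrite (eq_from_Tagged E).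
  + by move=> e; move: (tagne k2'); rewrite -e eqxx.
  + by move=> e; move: (tagne k1'); rewrite e eqxx.
  + by move/fi => ->.
- case=> u w; rewrite inE /= => /orP [/eqP eu|us].
    by subst u; exists (unsplit (inl w)); rewrite /f unsplitK.
  have [k' ek] := fc (existT _ u w) us.
  by exists (unsplit (inr k')); rewrite /f unsplitK.
- by move=> k; rewrite /f; case: (split k) => [w|k']; rewrite inE ?eqxx ?ft ?orbT.
- move=> k; rewrite /f -[k]splitK; case: (split k) => [w|k'] /=;
    rewrite ?split_lshift ?split_rshift /=.
  + split=> // i k2 j; rewrite -[k2]splitK /inner_edge.
    case: (split k2) => [w2|k2']; rewrite /= ?split_lshift ?split_rshift /=.
      by rewrite eqxx edge_at_val.
    by rewrite eq_sym (negbTE (tagne k2')).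
  + have [l1 a1 p1 e1] := fp k'; split=> // i k2 j.
    rewrite -[k2]splitK; case: (split k2) => [w2|k2'];
      rewrite /= ?split_lshift ?split_rshift /= ?e1 //.
    by rewrite /inner_edge (negbTE (tagne k')).
Qed.

(* The flattening of [G] built by VR-operations from its labels, listed as
   [v :: s]; with [B := max_arv G], port [j] of the label of [v] becomes port
   [v * B + j] of the disjoint union, the edges of [G] are added between these
   ports, and port [v * B + j] is finally renamed to the port of [v[j]] in [G]. *)
Definition vr_flat G (v : 'I_(nv G)) (s : seq 'I_(nv G)) :=
  rename_ports (ari G) (decode_port G (max_arv G))
    (add_edges (coded_edges G (max_arv G))
       (dunion_labels (nv G * max_arv G) (max_arv G) v s)).
Arguments vr_flat : clear implicits.

Lemma vr_flat_is_flat (arX : X -> nat) G v s :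
  wfVV arX G -> uniq (v :: s) -> (forall u, u \in v :: s) -> is_flat G (vr_flat G v s).
Proof.
move=> [_ [Hl _]] Hu Hc.
have [f [fi fc ft fp]] := dunion_labels_rep (nv G * max_arv G) (max_arv G) Hu.
have fb : bijective f.
  apply: (inj_card_bij fi); rewrite -(card_codom fi).
  apply/subset_leq_card/subsetP => p _.
  by have [k <-] := fc p (Hc _); exact: codom_f.
have pv k i : i < arv (vr_flat G v s) k ->
    port (lab G (tag (f k))) (tagged (f k)) i < arv G (tag (f k)).
  have [_ -> _ _] := fp k => Hi.
  by have [<- [_ [_ [Hp _]]]] := Hl (tag (f k)); exact: Hp.
have pB k i : i < arv (vr_flat G v s) k ->
    port (lab G (tag (f k))) (tagged (f k)) i < max_arv G.
  by move=> Hi; exact: leq_trans (pv _ i Hi) (max_arv_ge _).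
split=> //; exists f; split=> // k.
have [l1 a1 p1 e1] := fp k.
do 2!split=> //; split=> [i Hi|i k' j Hi Hj].
  by rewrite /= p1 decode_port_code //; [exact: pB | exact: pv].
apply/flat_edge_iff; have [_ _ p1' _] := fp k'.
move: (pB _ _ Hi) (pB _ _ Hj); rewrite /= Hi Hj /= e1 p1 p1' => *.
by rewrite coded_edgesE.
Qed.

Lemma is_flat_wf (arX : X -> nat) G F :
  wfVV arX G -> is_flat G F ->
  (forall k i k' j, edge F k i k' j -> i < arv F k /\ j < arv F k') -> wfV arX F.
Proof.
move=> [n0 [Hl [Hp _]]] [a [phi [[g _ d] Hphi]]] He; split.
  have [_ [n1 _]] := Hl (Ordinal n0).
  exact: leq_ltn_trans (leq0n _) (ltn_ord (g (existT _ (Ordinal n0) (Ordinal n1)))).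
split=> [k|].
  have [-> [-> _]] := Hphi k.
  by have [_ [_ [/(_ (tagged (phi k))) []]]] := Hl (tag (phi k)).
split=> // k i Hi; have [_ [ea [-> // _]]] := Hphi k; rewrite a; apply: Hp.
by have [<- [_ [_ [H _]]]] := Hl (tag (phi k)); apply: H; rewrite -ea.
Qed.

Lemma vr_flat_wf (arX : X -> nat) G v s :
  wfVV arX G -> uniq (v :: s) -> (forall u, u \in v :: s) -> wfV arX (vr_flat G v s).
Proof.
move=> W Hu Hc; apply: (is_flat_wf W (vr_flat_is_flat W Hu Hc)).
have [f [_ _ _ fp]] := dunion_labels_rep (nv G * max_arv G) (max_arv G) Hu.
move=> k i k' j /=; case/orP; last by case/and3P.
have [_ a1 _ e1] := fp k; have [_ a1' _ _] := fp k'.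
rewrite e1 a1 a1' => /inner_edgeP [u [w [w' [-> [-> E]]]]] /=.
by case: W => _ [/(_ u) [_ [_ [_ [_ /(_ _ _ _ _ E)]]]]].
Qed.

End VRFlattening.
Arguments vr_flat {X} G v s.

(** * Congruences and VR-compatible equivalences *)

Lemma wfV_ari_gt0 S (arS : S -> nat) (g : hg S) : ranked arS -> wfV arS g -> 0 < ari g.
Proof.
move=> rk [n0 [Hl [Hp _]]]; have v0 : 'I_(nv g) := Ordinal n0.
by apply: leq_ltn_trans (leq0n _) (Hp v0 0 _); rewrite -(Hl v0).1.
Qed.

Lemma psubst_wf S (arS : S -> nat) Xv (arXv : Xv -> nat) (t : hg (hg S + Xv)) eta :
  wf (sum_ar arXv) (sum_ok arS) t ->
  (forall x, wfV arS (eta x) /\ ari (eta x) = arXv x) -> wfVV arS (psubst eta t).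
Proof.
move=> [n0 [Hl [Hp He]]] Heta; do 2!split=> //.
by move=> v /=; case: (Hl v); case: (lab t v) => [g|x] /= <- //; case: (Heta x).
Qed.

Lemma ord_enum_cons n (v0 : 'I_n) :
  exists (v : 'I_n) (s : seq 'I_n), uniq (v :: s) /\ forall u, u \in v :: s.
Proof.
case E: (enum 'I_n) => [|v s]; first by have := mem_enum 'I_n v0; rewrite E.
by exists v, s; rewrite -E enum_uniq; split=> // u; rewrite mem_enum.
Qed.

Definition relabel Y S (sh : hg Y) (l : 'I_(nv sh) -> hg S) : hg (hg S) :=
  @HG (hg S) (nv sh) (ari sh) (arv sh) l (edge sh) (port sh).
Arguments relabel {Y S} sh l.

Section EquivVS.
Variables (S : Type) (arS : S -> nat) (R : hg S -> hg S -> Prop).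
Hypothesis Req : equiv_VS arS R.

Lemma equiv_VS_hiso G G' H H' :
  wfV arS G -> wfV arS G' -> hiso G H -> hiso G' H' -> R H H' -> R G G'.
Proof.
have [_ [Rs [Rt [RW Ri]]]] := Req => WG WG' GH GH' RH.
have [WH [WH' _]] := RW _ _ RH.
apply: Rt (Ri _ _ WG WH GH) (Rt _ _ _ RH (Rs _ _ (Ri _ _ WG' WH' GH'))).
Qed.

End EquivVS.

Section VRToCongruence.
Variables (S : Type) (arS : S -> nat) (R : hg S -> hg S -> Prop).
Hypotheses (arS_gt0 : ranked arS) (Req : equiv_VS arS R) (RVR : VR_compatible arS R).

Lemma vr_flat_compat Y (sh : hg Y) (l1 l2 : 'I_(nv sh) -> hg S) (v : 'I_(nv sh)) s :
  (forall u j, j < arv sh u -> port sh u j < ari sh) ->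
  (forall u, R (l1 u) (l2 u) /\ ari (l1 u) = arv sh u) ->
  R (vr_flat (relabel sh l1) v s) (vr_flat (relabel sh l2) v s).
Proof.
have [_ [_ [_ [RW _]]]] := Req; have [Cu [Cr Ce]] := RVR => Hp Hl.
have arv_gt0 u : 0 < arv sh u.
  by have [/RW [W1 _] <-] := Hl u; exact: wfV_ari_gt0 arS_gt0 W1.
set B := max_arv sh; set M := nv sh * B.
have B_gt0 : 0 < B := leq_trans (arv_gt0 v) (max_arv_ge v).
have M_gt0 : 0 < M by rewrite muln_gt0 B_gt0 (leq_ltn_trans (leq0n _) (ltn_ord v)).
have Rlabel u : R (coded_label (G := relabel sh l1) M B u)
                  (coded_label (G := relabel sh l2) M B u).
  have [Ru au] := Hl u; apply: (Cr (ari (l1 u))) => //; first by rewrite au.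
  move=> i; rewrite au => Hi; apply: port_code_lt => //.
  exact: leq_trans Hi (max_arv_ge u).
have Rdunion v' s' : R (dunion_labels (G := relabel sh l1) M B v' s')
                       (dunion_labels (G := relabel sh l2) M B v' s').
  elim: s' v' => [|v1 s1 IH] v' /=; first exact: Rlabel.
  by apply: Cu; [rewrite dunion_labels_ari | exact: Rlabel | exact: IH].
apply: (Cr M) => //.
- move=> i _; apply: decode_port_lt => //.
  exact: leq_ltn_trans (leq0n _) (Hp v 0 (arv_gt0 v)).
- exact: dunion_labels_ari.
- by apply: (Ce M) => //; [exact: coded_edges_lt | exact: dunion_labels_ari].
Qed.

Lemma VR_compatible_congruence : congruence arS R.
Proof.
split=> // Xv arXv _ t Wt eta eta' He He' HR F F' WF WF' fF fF'.
have [Rr [_ [_ [RW _]]]] := Req.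
have W1 := psubst_wf Wt He; have W2 := psubst_wf Wt He'.
have [v [s [Hu Hc]]] := ord_enum_cons (Ordinal Wt.1).
(* [relabel t (l eta)] is [psubst eta t] up to conversion. *)
pose l (e : Xv -> hg S) v := match lab t v with inl g => g | inr x => e x end.
have R12 : R (vr_flat (relabel t (l eta)) v s) (vr_flat (relabel t (l eta')) v s).
  apply: vr_flat_compat => [u j Hj|u]; first by case: Wt => _ [_ [Hp _]]; exact: Hp.
  rewrite /l; case: Wt => _ [/(_ u)]; case: (lab t u) => [g|x] /= [<- Hok] _.
    by split=> //; exact: Rr.
  by split=> //; case: (He x).
have [w1 [w2 _]] := RW _ _ R12.
apply: (equiv_VS_hiso Req WF WF' _ _ R12).
  exact: is_flat_hiso fF (vr_flat_is_flat W1 Hu Hc) WF w1.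
exact: is_flat_hiso fF' (vr_flat_is_flat W2 Hu Hc) WF' w2.
Qed.

End VRToCongruence.

Lemma dunion_wf S (arS : S -> nat) (G H : hg S) :
  wfV arS G -> wfV arS H -> ari G = ari H -> wfV arS (dunion G H).
Proof.
move=> [g0 [gl [gp ge]]] [h0 [hl [hp he]]] e; split; first by rewrite addn_gt0 g0.
split=> [k|]; first by rewrite /=; case: (split k).
split=> [k i|k i k' j] /=.
  by case: (split k) => w Hi; [exact: gp | rewrite e; exact: hp].
by case: (split k) => w; case: (split k') => w' //; [exact: ge | exact: he].
Qed.

Lemma rename_ports_wf S (arS : S -> nat) (G : hg S) m f :
  wfV arS G -> (forall i, i < ari G -> f i < m) -> wfV arS (rename_ports m f G).
Proof. by move=> [g0 [gl [gp ge]]] Hf; do 3!split=> //; move=> k i Hi /=; exact/Hf/gp. Qed.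

Lemma add_edges_wf S (arS : S -> nat) (G : hg S) E : wfV arS G -> wfV arS (add_edges E G).
Proof.
move=> [g0 [gl [gp ge]]]; do 3!split=> //.
by move=> k i k' j /= /orP [/ge|/and3P [-> ->]].
Qed.

Lemma mem_ord0 (u : 'I_1) : u \in [:: ord0].
Proof. by rewrite inE; apply/eqP/val_inj; case: u => [[]]. Qed.

Lemma mem_ord0_max (u : 'I_2) : u \in [:: ord0; ord_max].
Proof.
by rewrite !inE; case: u => [[|[|//]]] p; apply/orP; [left|right]; exact/eqP/val_inj.
Qed.

Section VRTerms.
Variable S : Type.

Definition dunion_term n : hg (hg S + bool) :=
  @HG (hg S + bool) 2 n (fun _ => n) (fun v => inr (val v == 1))
      (fun _ _ _ _ => false) (fun _ i => i).
Definition rename_ports_term n m (f : nat -> nat) : hg (hg S + unit) :=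
  @HG (hg S + unit) 1 m (fun _ => n) (fun _ => inr tt)
      (fun _ _ _ _ => false) (fun _ i => f i).
Definition add_edges_term n (E : rel nat) : hg (hg S + unit) :=
  @HG (hg S + unit) 1 n (fun _ => n) (fun _ => inr tt)
      (fun _ i _ j => E i j) (fun _ i => i).

Definition pair_subst (G H : hg S) (b : bool) := if b then H else G.

Variable arS : S -> nat.

Lemma hiso_dunion_term (G H : hg S) :
  wfV arS G -> wfV arS H -> ari G = ari H ->
  hiso (dunion G H)
       (vr_flat (psubst (pair_subst G H) (dunion_term (ari G))) ord0 [:: ord_max]).
Proof.
move=> [_ [_ [gp _]]] [_ [_ [hp _]]] e; split=> //.
exists id; split; first by exists id.
set T := psubst _ _; move=> k; do 2!split=> //; split=> [i|i k' j] /=.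
  case: (split k) => w Hi /=.
    have pl := gp w i Hi.
    rewrite (@decode_port_code _ T _ ord0) //.
    exact: (leq_trans pl (@max_arv_ge _ T ord0)).
  have pl : port H w i < ari G by rewrite e; exact: hp.
  rewrite (@decode_port_code _ T _ ord_max) //.
  exact: (leq_trans pl (@max_arv_ge _ T ord_max)).
by rewrite coded_edges_no_edge ?andbF ?orbF.
Qed.

Lemma hiso_rename_ports_term (G : hg S) n m f :
  wfV arS G -> ari G = n ->
  hiso (rename_ports m f G)
       (vr_flat (psubst (fun _ => G) (rename_ports_term n m f)) ord0 [::]).
Proof.
move=> [_ [_ [gp _]]] e; split=> //.
exists id; split; first by exists id.
set T := psubst _ _; move=> k; do 2!split=> //; split=> [i /= Hi|i k' j /=].
  have pl : port G k i < n by rewrite -e; exact: gp.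
  rewrite (@decode_port_code _ T _ ord0) //.
  exact: (leq_trans pl (@max_arv_ge _ T ord0)).
by rewrite coded_edges_no_edge ?andbF ?orbF.
Qed.

Lemma hiso_add_edges_term (G : hg S) n E :
  wfV arS G -> ari G = n ->
  hiso (add_edges E G) (vr_flat (psubst (fun _ => G) (add_edges_term n E)) ord0 [::]).
Proof.
move=> [_ [_ [gp _]]] e.
set T := psubst _ _; have Bn : n <= max_arv T := max_arv_ge (ord0 : 'I_(nv T)).
have pl k i : i < arv G k -> port G k i < n by rewrite -e; exact: gp.
split=> //; exists id; split; first by exists id.
move=> k; do 2!split=> //; split=> [i /= Hi|i k' j /=].
  have pli := pl _ _ Hi.
  by rewrite (@decode_port_code _ T _ ord0) //; exact: leq_trans pli Bn.
case Hi: (i < arv G k); case Hj: (j < arv G k') => //=.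
have pli := pl _ _ Hi; have plj := pl _ _ Hj.
rewrite (@coded_edgesE _ T _ ord0 ord0) //.
  exact: leq_trans pli Bn.
exact: leq_trans plj Bn.
Qed.

End VRTerms.

Section CongruenceToVR.
Variables (S : Type) (arS : S -> nat) (R : hg S -> hg S -> Prop).
Hypotheses (arS_gt0 : ranked arS) (Rcong : congruence arS R).

Lemma congruence_vr_flat Xv (arXv : Xv -> nat) (t : hg (hg S + Xv)) eta eta'
    (v : 'I_(nv t)) s :
  ranked arXv -> wf (sum_ar arXv) (sum_ok arS) t ->
  (forall x, wfV arS (eta x) /\ ari (eta x) = arXv x) ->
  (forall x, wfV arS (eta' x) /\ ari (eta' x) = arXv x) ->
  (forall x, R (eta x) (eta' x)) -> uniq (v :: s) -> (forall u, u \in v :: s) ->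
  R (vr_flat (psubst eta t) v s) (vr_flat (psubst eta' t) v s).
Proof.
move=> rkX Wt He He' HR Hu Hc.
have W1 := psubst_wf Wt He; have W2 := psubst_wf Wt He'.
apply: (Rcong.2 Xv arXv rkX t Wt eta eta' He He' HR).
- exact: vr_flat_wf W1 Hu Hc.
- exact: vr_flat_wf W2 Hu Hc.
- exact: vr_flat_is_flat W1 Hu Hc.
- exact: vr_flat_is_flat W2 Hu Hc.
Qed.

Let Req := Rcong.1.
Let RW := Req.2.2.2.1.

Lemma congruence_dunion G G' H H' :
  ari G = ari H -> R G G' -> R H H' -> R (dunion G H) (dunion G' H').
Proof.
move=> eGH RG RH; have [wG [wG' eG]] := RW RG; have [wH [wH' eH]] := RW RH.
have eGH' : ari G' = ari H' by rewrite -eG -eH.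
apply: (equiv_VS_hiso Req (dunion_wf wG wH eGH) (dunion_wf wG' wH' eGH')
          (hiso_dunion_term wG wH eGH) (hiso_dunion_term wG' wH' eGH')).
have n0 := wfV_ari_gt0 arS_gt0 wG.
rewrite -eG; apply: (@congruence_vr_flat bool (fun _ => ari G)) => //.
- by case; split; rewrite //= eGH.
- by case; split; rewrite //= -?eG -?eH ?eGH.
- by case.
- exact: mem_ord0_max.
Qed.

Lemma congruence_rename_ports n m (f : nat -> nat) G G' :
  0 < n -> (forall i, i < n -> f i < m) -> ari G = n -> R G G' ->
  R (rename_ports m f G) (rename_ports m f G').
Proof.
move=> n0 Hf eG RG; have [wG [wG' eG']] := RW RG.
have eG'n : ari G' = n by rewrite -eG'.
have wf : wfV arS (rename_ports m f G) by apply: rename_ports_wf wG _; rewrite eG.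
have wf' : wfV arS (rename_ports m f G') by apply: rename_ports_wf wG' _; rewrite eG'n.
apply: (equiv_VS_hiso Req wf wf' (hiso_rename_ports_term m f wG eG)
          (hiso_rename_ports_term m f wG' eG'n)).
by apply: (@congruence_vr_flat unit (fun _ => n)) => //; exact: mem_ord0.
Qed.

Lemma congruence_add_edges n (E : rel nat) G G' :
  0 < n -> (forall i j, E i j -> i < n /\ j < n) -> ari G = n -> R G G' ->
  R (add_edges E G) (add_edges E G').
Proof.
move=> n0 HE eG RG; have [wG [wG' eG']] := RW RG.
have eG'n : ari G' = n by rewrite -eG'.
apply: (equiv_VS_hiso Req (add_edges_wf _ wG) (add_edges_wf _ wG')
          (hiso_add_edges_term E wG eG) (hiso_add_edges_term E wG' eG'n)).
apply: (@congruence_vr_flat unit (fun _ => n)) => //.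
- by do 3!split=> //; move=> v i w j /= /HE.
- exact: mem_ord0.
Qed.

Lemma congruence_VR_compatible : VR_compatible arS R.
Proof.
split; first exact: congruence_dunion.
split=> [n m f n0 Hf G G'|n E n0 HE G G']; first exact: congruence_rename_ports.
exact: congruence_add_edges.
Qed.

End CongruenceToVR.

(** * Algebras and congruences *)

Section Kernel.
Variables (S : Type) (arS : S -> nat) (A : Type) (arA : A -> nat).
Variables (pi : hg A -> A) (h : hg S -> A).
Hypothesis h_hom : is_hom arS arA pi h.

Definition hom_kernel G H := [/\ wfV arS G, wfV arS H, ari G = ari H & h G = h H].

Lemma hom_kernel_congruence : congruence arS hom_kernel.
Proof.
have [h_ar [h_iso h_flat]] := h_hom.
split.
  split=> [G WG|]; first by split.
  split=> [G H [? ? ? ?]|]; first by split.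
  split=> [G H K [? ? e1 h1] [? ? e2 h2]|]; first by split; rewrite ?e1 ?h1.
  split=> [G H [? ? ? ?] //|G H WG WH HGH].
  by split=> //; [exact: HGH.1 | exact: h_iso].
move=> Xv arXv _ t Wt eta eta' He He' HR F F' WF WF' fF fF'.
split=> //; first by rewrite fF.1 fF'.1.
rewrite (h_flat _ _ (psubst_wf Wt He) WF fF) (h_flat _ _ (psubst_wf Wt He') WF' fF').
congr (pi (@HG _ _ _ _ _ _ _)); apply: functional_extensionality => v /=.
by case: (lab t v) => // x; have [_ _ _ ->] := HR x.
Qed.

Lemma hom_kernel_finite_index : finite_on_arities arA -> finite_index arS hom_kernel.
Proof.
have [h_ar _] := h_hom => finA n; have [l Hl] := finA n.
have [[G0 _]|nE] := classic (exists G0, wfV arS G0 /\ ari G0 = n); last first.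
  by exists nil => G WG aG; case: nE; exists G.
pose pick a := epsilon (inhabits G0) (fun G => wfV arS G /\ ari G = n /\ h G = a).
exists (map pick l) => G WG aG; exists (pick (h G)); split.
  by apply: List.in_map; apply: Hl; rewrite h_ar.
have [W' [a' h']] := epsilon_spec (inhabits G0)
   (fun G' => wfV arS G' /\ ari G' = n /\ h G' = h G)
   (ex_intro _ G (conj WG (conj aG erefl))).
by split; rewrite ?aG ?a'.
Qed.

End Kernel.

Lemma rec_by_finite_algebra_congruence S (arS : S -> nat) (L : hg S -> Prop) :
  rec_by_finite_algebra arS L -> rec_by_finite_congruence arS L.
Proof.
case=> A [arA [pi [_ [finA [_ [h [Fp [h_hom HLF]]]]]]]].
exists (hom_kernel arS h); split; first exact: hom_kernel_congruence h_hom.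
split; first exact: hom_kernel_finite_index h_hom finA.
move=> G H WG WH aG [_ _ aGH hGH] /(HLF G WG aG).
by rewrite hGH -HLF // -aGH.
Qed.

Section Quotient.
Variables (S : Type) (arS : S -> nat) (R : hg S -> hg S -> Prop).
Hypotheses (arS_gt0 : ranked arS) (Rcong : congruence arS R).

Let Req := Rcong.1.

Lemma congruence_flat_relabel (G : hg (hg S)) (l : 'I_(nv G) -> hg S) F F' :
  wfVV arS G -> (forall v, R (lab G v) (l v)) -> wfV arS F -> wfV arS F' ->
  is_flat G F -> is_flat (relabel G l) F' -> R F F'.
Proof.
case: G l => nG aG arvG labG eG pG /= l WG HR WF WF' fF fF'.
have [n0 [Hl [Hp He]]] := WG.
pose t := @HG (hg S + 'I_nG) nG aG arvG inr eG pG.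
have W_t : wf (sum_ar arvG) (sum_ok arS) t by do 3!split=> //.
have arv_gt0 : ranked arvG.
  by move=> v; have [e W] := Hl v; move: (wfV_ari_gt0 arS_gt0 W); rewrite e.
have [_ [_ [_ [RW _]]]] := Req.
apply: (Rcong.2 _ _ arv_gt0 t W_t labG l) => // v.
  by have [e W] := Hl v.
by have [_ [Wl <-]] := RW _ _ (HR v); have [e _] := Hl v.
Qed.

Definition quot := {P : hg S -> Prop | exists G, wfV arS G /\ P = R G}.

Variables (g0 : hg S) (W0 : wfV arS g0).

Definition qrepr (a : quot) : hg S :=
  epsilon (inhabits g0) (fun G => wfV arS G /\ sval a = R G).

(* Ill-formed hypergraphs are sent to the junk class of [g0]. *)
Definition qclass (G : hg S) : quot :=
  match excluded_middle_informative (wfV arS G) with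
  | left W => exist _ (R G) (ex_intro _ G (conj W erefl))
  | right _ => exist _ (R g0) (ex_intro _ g0 (conj W0 erefl))
  end.

Lemma qrepr_spec a : wfV arS (qrepr a) /\ sval a = R (qrepr a).
Proof. by case: a => P HP; exact: (epsilon_spec (inhabits g0) _ HP). Qed.

Lemma qclass_wf G : wfV arS G -> sval (qclass G) = R G.
Proof. by move=> W; rewrite /qclass; case: excluded_middle_informative. Qed.

Lemma quot_eq (a b : quot) : sval a = sval b -> a = b.
Proof. by case: a b => [P p] [Q q] /= e; subst Q; congr exist; exact: proof_irrelevance. Qed.

Lemma equiv_VS_class G H : R G H -> R G = R H.
Proof.
have [_ [Rs [Rt _]]] := Req => RGH; apply: functional_extensionality => K.
by apply: propositional_extensionality; split=> [/(Rt _ _ _ (Rs _ _ RGH))|/(Rt _ _ _ RGH)].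
Qed.

Lemma qclass_eq G H : R G H -> qclass G = qclass H.
Proof.
move=> RGH; have [WG [WH _]] := Req.2.2.2.1 _ _ RGH.
by apply: quot_eq; rewrite !qclass_wf //; exact: equiv_VS_class.
Qed.

Lemma qreprK a : qclass (qrepr a) = a.
Proof. by have [W e] := qrepr_spec a; apply: quot_eq; rewrite qclass_wf. Qed.

Lemma rel_qrepr_qclass G : wfV arS G -> R G (qrepr (qclass G)).
Proof.
move=> W; have [Wr e] := qrepr_spec (qclass G).
by rewrite qclass_wf // in e; rewrite e; exact: Req.1.
Qed.

Lemma ari_qrepr_qclass G : wfV arS G -> ari (qrepr (qclass G)) = ari G.
Proof. by move=> W; have [_ [_ ->]] := Req.2.2.2.1 _ _ (rel_qrepr_qclass W). Qed.

Definition quot_ar (a : quot) := ari (qrepr a).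
Definition quot_prod (K : hg quot) : quot := qclass (flat (Vmap qrepr K)).

Lemma quot_ar_gt0 : ranked quot_ar.
Proof. by move=> a; exact: wfV_ari_gt0 arS_gt0 (qrepr_spec a).1. Qed.

Lemma wfVV_qrepr (K : hg quot) : wfV quot_ar K -> wfVV arS (Vmap qrepr K).
Proof.
move=> [n0 [Hl Hpe]]; do 2!split=> //.
by move=> v /=; split; [exact: (Hl v).1 | exact: (qrepr_spec _).1].
Qed.

Lemma quot_ar_prod K : wfV quot_ar K -> quot_ar (quot_prod K) = ari K.
Proof. by move=> W; rewrite /quot_ar ari_qrepr_qclass //; exact: flat_wf (wfVV_qrepr W). Qed.

Lemma quot_prod_flat (G : hg (hg quot)) F :
  wfVV quot_ar G -> wfV quot_ar F -> is_flat G F ->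
  quot_prod (Vmap quot_prod G) = quot_prod F.
Proof.
move=> WG WF fG; have [_ [Rs _]] := Req.
have Wl v : wfV arS (flat (Vmap qrepr (lab G v))).
  by apply/flat_wf/wfVV_qrepr; have [_ [/(_ v) [_ ?] _]] := WG.
apply/qclass_eq/Rs.
apply: (@congruence_flat_relabel (Vmap (fun g => flat (Vmap qrepr g)) G)
          (fun v => qrepr (quot_prod (lab G v)))).
- have [n0 [Hl Hpe]] := WG; do 2!split=> //.
  by move=> v /=; split; [rewrite (Hl v).1 | exact: Wl].
- by move=> v; exact: rel_qrepr_qclass (Wl v).
- exact: flat_wf (wfVV_qrepr WF).
- apply/flat_wf/wfVV_qrepr; have [n0 [Hl Hpe]] := WG; do 2!split=> //.
  by move=> v /=; split=> //; rewrite quot_ar_prod; [exact: (Hl v).1 | exact: (Hl v).2].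
- by apply: (is_flat_flat_Vmap (arX := quot_ar)) => // a; split; [exact: (qrepr_spec a).1|].
- exact: flat_is_flat.
Qed.

(* A hypergraph isomorphic to [K1] is a flattening of the unit of [K1]. *)
Lemma quot_prod_hiso K1 K2 :
  wfV quot_ar K1 -> wfV quot_ar K2 -> hiso K1 K2 -> quot_prod K1 = quot_prod K2.
Proof.
move=> W1 W2 I12; have WU : wfVV quot_ar (hunit (@ari _) K1) by do 3!split.
rewrite -(quot_prod_flat WU W1 (is_flat_hunit (hiso_refl K1))).
exact: quot_prod_flat WU W2 (is_flat_hunit I12).
Qed.

Lemma quot_prod_hunit a : quot_prod (hunit quot_ar a) = a.
Proof.
have Wr := (qrepr_spec a).1; rewrite -[RHS]qreprK; apply: qclass_eq.
have WU : wfVV arS (hunit (@ari S) (qrepr a)) by do 3!split.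
have WF := flat_wf WU; apply: (Req.2.2.2.2 _ _ WF Wr).
exact: is_flat_hiso (flat_is_flat _) (is_flat_hunit (hiso_refl _)) WF Wr.
Qed.

Lemma quot_Valg : is_Valg quot_ar quot_prod.
Proof.
split; first exact: quot_ar_prod.
split; first exact: quot_prod_hiso.
by split; [exact: quot_prod_hunit | move=> *; exact: quot_prod_flat].
Qed.

Lemma qclass_hom : is_hom arS quot_ar quot_prod qclass.
Proof.
split; first exact: ari_qrepr_qclass.
split=> [G H WG WH GH|G F WG WF fG]; first by apply/qclass_eq/Req.2.2.2.2.
apply: qclass_eq.
apply: (congruence_flat_relabel (l := fun v => qrepr (qclass (lab G v)))) => //.
- by move=> v; apply: rel_qrepr_qclass; have [_ [/(_ v) []]] := WG.
- apply/flat_wf/wfVV_qrepr; have [n0 [Hl Hpe]] := WG; do 2!split=> //.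
  move=> v /=; split=> //.
  by rewrite /quot_ar ari_qrepr_qclass; [exact: (Hl v).1 | exact: (Hl v).2].
- exact: flat_is_flat.
Qed.

Lemma quot_finite : finite_index arS R -> finite_on_arities quot_ar.
Proof.
move=> Rfin n; have [l Hl] := Rfin n; exists (map qclass l) => a ea.
have [H [inH RaH]] := Hl _ (qrepr_spec a).1 ea.
by rewrite -(qreprK a) (qclass_eq RaH); exact: List.in_map.
Qed.

End Quotient.

Lemma rec_by_finite_algebra_uninhabited S (arS : S -> nat) (L : hg S -> Prop) :
  ~ inhabited S -> rec_by_finite_algebra arS L.
Proof.
move=> nS; have noG (G : hg S) : ~ wfV arS G.
  by move=> [n0 _]; apply: nS; exact: inhabits (lab G (Ordinal n0)).
have succ_gt0 : ranked succn by [].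
exists nat, succn, (fun G => (ari G).-1); split=> //.
split; first by move=> n; exists [:: n.-1] => a <-; left.
split.
  split=> [G W|]; first by rewrite prednK // (wfV_ari_gt0 succ_gt0 W).
  split=> [G H _ _ [-> _] //|]; split=> // G F _ _ [e _]; by rewrite /= e.
exists (fun G => (ari G).-1), (fun _ => False).
split; last by move=> G /noG.
by split=> [G /noG []|]; split=> [G H /noG []|G F _ /noG []].
Qed.

Lemma rec_by_finite_congruence_algebra S (arS : S -> nat) (L : hg S -> Prop) :
  ranked arS -> rec_by_finite_congruence arS L -> rec_by_finite_algebra arS L.
Proof.
move=> arS_gt0 [R [Rcong [Rfin Runion]]].
have [[s0]|] := classic (inhabited S); last exact: rec_by_finite_algebra_uninhabited.
set g0 := hunit arS s0; have W0 : wfV arS g0 by do 3!split.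
have [_ [Rs _]] := Rcong.1.
exists (quot arS R), (quot_ar (R := R) g0), (quot_prod (R := R) W0).
split; first exact: quot_ar_gt0.
split; first exact: quot_finite.
split; first exact: quot_Valg.
exists (qclass R W0), (fun a => L (qrepr g0 a)); split; first exact: qclass_hom.
move=> G WG aG; have [Wr _] := qrepr_spec g0 (qclass R W0 G).
have RG := rel_qrepr_qclass Rcong W0 WG.
split=> [|LG]; first exact: Runion.
by apply: Runion (Rs _ _ RG) LG; rewrite ?ari_qrepr_qclass.
Qed.

Theorem theorem5p7 (S : Type) (arS : S -> nat) (HS : ranked arS)
  (L : hg S -> Prop)
  (HL : forall G, L G -> wfV arS G /\ ari G = 1)
  (HLiso : forall G H, L G -> wfV arS H -> hiso G H -> L H) :
  (rec_by_finite_algebra arS L <-> rec_by_finite_congruence arS L) /\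
  (rec_by_finite_congruence arS L <-> VR_recognisable arS L).
Proof.
split; split.
- exact: rec_by_finite_algebra_congruence.
- exact: rec_by_finite_congruence_algebra.
- case=> R [Rcong [Rfin Runion]]; exists R.
  by split; [exact: Rcong.1 | split; first exact: congruence_VR_compatible].
- case=> R [Req [RVR [Rfin Runion]]]; exists R.
  by split; first exact: VR_compatible_congruence.
Qed.
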